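(* If $C\subseteq\mathbb{R}$ satisfies $|C|=|\mathbb{R}\setminus C|=\mathfrak{c}$, then there is a two-point selection $f$ on $\mathbb{R}$ such that $C\in\mathcal{M}_f\setminus\mathcal{B}_f(\mathbb{R})$.
   Context: $\mathfrak{c}=|\mathbb{R}|$. A two-point selection on $\mathbb{R}$ is a function $f$ from the set of two-element subsets of $\mathbb{R}$ to $\mathbb{R}$ with $f(F)\in F$. Write $r<_f s$ if $f(\{r,s\})=r$ ($r\ne s$) and $r\le_f s$ if $r<_f s$ or $r=s$. Put $(\leftarrow,r)_f=\{x: x<_f r\}$, $(r,\rightarrow)_f=\{x: r<_f x\}$, and $(r,s]_f=\{x: r<_f x \text{ and } x\le_f s\}$. The topology $\tau_f$ is generated (as a subbase) by all $(\leftarrow,r)_f$, $(r,\rightarrow)_f$; $\mathcal{B}_f(\mathbb{R})$ is the $\sigma$-algebra generated by $\tau_f$. The outer measure $\lambda_f$ on $\mathbb{R}$ is $\lambda_f(A)=\inf\{\sum_{n\in\mathbb{N}}|s_n-r_n| : A\subseteq\bigcup_{n\in\mathbb{N}}(r_n,s_n]_f\}$ if $A$ can be covered by countably many such sets, and $\lambda_f(A)=+\infty$ otherwise. $\mathcal{M}_f$ is the $\sigma$-algebra of $\lambda_f$-measurable sets (in the sense of Carathéodory). *)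

From HB Require Import structures.
From mathcomp Require Import all_boot all_order all_algebra.
From mathcomp Require Import all_classical all_reals all_analysis.
Set Implicit Arguments. Unset Strict Implicit. Unset Printing Implicit Defensive.
Import Order.TTheory GRing.Theory Num.Theory.
Local Open Scope classical_set_scope.
Local Open Scope ring_scope.

Section TwoPoint.
Variable R : realType.

(* f is a two-point selection: it assigns to every two-element subset F of R
   an element of F (its values on other subsets are irrelevant). *)
Definition two_point_selection (f : set R -> R) : Prop :=
  forall r s : R, r <> s -> [set r; s] (f [set r; s]).

Definition sel_lt (f : set R -> R) (r s : R) : Prop :=
  r <> s /\ f [set r; s] = r.

Definition sel_le (f : set R -> R) (r s : R) : Prop := sel_lt f r s \/ r = s.

Definition sel_ray_left (f : set R -> R) (r : R) : set R := [set x | sel_lt f x r].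
Definition sel_ray_right (f : set R -> R) (r : R) : set R := [set x | sel_lt f r x].
Definition sel_itv (f : set R -> R) (r s : R) : set R :=
  [set x | sel_lt f r x /\ sel_le f x s].

Definition sel_subbase (f : set R -> R) : set (set R) :=
  [set U | exists r, U = sel_ray_left f r \/ U = sel_ray_right f r].

(* tau_f : the topology generated by the subbase, i.e. the sets U such that
   every point of U lies in a finite intersection of subbasic sets
   contained in U (the empty intersection being R). *)
Definition sel_open (f : set R -> R) : set (set R) :=
  [set U | forall x, U x -> exists (n : nat) (G : nat -> set R),
     (forall i, (i < n)%N -> sel_subbase f (G i)) /\
     (\bigcap_(i in [set i | (i < n)%N]) G i) x /\
     (\bigcap_(i in [set i | (i < n)%N]) G i) `<=` U].

Definition sel_borel (f : set R -> R) : set (set R) := <<s sel_open f >>.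

(* the outer measure lambda_f; the infimum of the empty set is +oo *)
Definition sel_lambda (f : set R -> R) (A : set R) : \bar R :=
  ereal_inf [set v : \bar R | exists (r s : nat -> R),
     A `<=` \bigcup_n sel_itv f (r n) (s n) /\
     v = (\sum_(0 <= n <oo) (`|s n - r n|)%:E)%E].

End TwoPoint.

From HB Require Import structures.
From mathcomp Require Import all_boot all_order all_algebra.
From mathcomp Require Import all_classical all_reals all_analysis.
From mathcomp Require Import lra.
Set Implicit Arguments. Unset Strict Implicit. Unset Printing Implicit Defensive.
Import Order.TTheory GRing.Theory Num.Theory.
Local Open Scope classical_set_scope.
Local Open Scope ring_scope.

(* A bijection g : C -> ~` C splits R into pairs {c, g c}.  Order R by an
   injective real key of the pair, and inside a pair put c before g c; let f
   select the smaller point.  Then c has no point just to its right and g c none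
   just to its left, so an open set containing c (resp. g c) contains every
   point whose key lies in some interval (a, key c) (resp. (key c, b)).
   Choosing rationals in these intervals shows that an open set separates only
   countably many pairs.  This property survives complements and countable
   unions, but C separates all of the uncountably many pairs, so C is not
   Borel.  If 0 is not in C, the key can moreover make 0 the largest point and
   make a sequence y with |y j| <= 2^-j coinitial; the intervals
   (y (M + k + 1), y (M + k)] and (y (M + 1), 0] then cover R at total cost
   O(2^-M), so lambda_f vanishes and every set is Caratheodory measurable.
   If 0 is in C, apply this to the complement of C. *)

Lemma frequently_or_frequently_not (P : nat -> Prop) :
  (forall N, exists2 n, (N <= n)%N & P n) \/
  (forall N, exists2 n, (N <= n)%N & ~ P n).
Proof.
have [|/existsNP[N HN]] := pselect (forall N, exists2 n, (N <= n)%N & P n).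
  by left.
right=> M; exists (maxn N M); first exact: leq_maxr.
by move=> P_NM; apply: HN; exists (maxn N M) => //; exact: leq_maxl.
Qed.

Lemma frequently_subsequence (P : nat -> Prop) :
  (forall N, exists2 n, (N <= n)%N & P n) ->
  exists phi : nat -> nat,
    [/\ injective phi, forall j, (j <= phi j)%N & forall j, P (phi j)].
Proof.
move=> HP; have /choice[next nextP] : forall N, exists n, (N < n)%N /\ P n.
  by move=> N; have [n] := HP N.+1; exists n.
pose phi j := iter j.+1 next 0%N.
have phiS j : (phi j < phi j.+1)%N by rewrite /phi iterS; exact: (nextP _).1.
exists phi; split.
- exact/incn_inj/leq_mono/(homo_ltn ltn_trans).
- by elim=> [|j IH] //; exact: leq_ltn_trans IH (phiS j).
- by move=> j; rewrite /phi iterS; exact: (nextP _).2.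
Qed.

Lemma countable_left_isolated (T : Type) (R : realType) (S : set T)
    (k : T -> R) :
  {in S &, injective k} ->
  (forall c, S c ->
    exists2 a, a < k c & forall c', S c' -> k c' < k c -> k c' <= a) ->
  countable S.
Proof.
move=> k_inj gap; have /choice[q qP] : forall c, exists q : rat, S c ->
    ratr q < k c /\ forall c', S c' -> k c' < k c -> k c' < ratr q.
  move=> c; have [Sc|] := pselect (S c); last by exists 0.
  have [a ac below] := gap c Sc.
  have [q] := rat_in_itvoo ac; rewrite in_itv /= => /andP[aq qc].
  by exists q => _; split=> // c' Sc' /(below _ Sc') /le_lt_trans; apply.
apply/countable_injP; exists (pickle \o q) => c c' Sc Sc'.
move=> /(pcan_inj pickleK) qcc'; apply: k_inj => //.
move: Sc Sc'; rewrite !inE => Sc Sc'.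
have [lt|lt|//] := ltgtP (k c) (k c').
- have := (qP c' Sc').2 c Sc lt; rewrite -qcc'.
  by move=> /lt_trans/(_ (qP c Sc).1); rewrite ltxx.
- have := (qP c Sc).2 c' Sc' lt; rewrite qcc'.
  by move=> /lt_trans/(_ (qP c' Sc').1); rewrite ltxx.
Qed.

Lemma countable_right_isolated (T : Type) (R : realType) (S : set T)
    (k : T -> R) :
  {in S &, injective k} ->
  (forall c, S c ->
    exists2 b, k c < b & forall c', S c' -> k c < k c' -> b <= k c') ->
  countable S.
Proof.
move=> k_inj gap; apply: (@countable_left_isolated _ _ _ (fun c => - k c)).
  by move=> c c' Sc Sc' /oppr_inj; exact: k_inj.
move=> c Sc; have [b cb above] := gap c Sc; exists (- b); first by rewrite ltrN2.
by move=> c' Sc'; rewrite ltrN2 lerN2; exact: above.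
Qed.

Section SeparatedPairs.
Variables (T : Type) (C : set T) (g : T -> T).

Definition separated_pairs (A : set T) : set T :=
  [set c | C c /\ ~ (A c <-> A (g c))].

Lemma separated_pairsC A : separated_pairs (~` A) = separated_pairs A.
Proof.
apply/seteqP; split=> c [Cc sep]; split=> // AcE; apply: sep; move: AcE => /=.
  by move=> AcE; split; apply: contra_not; apply AcE.
by have [Ac|nAc] := pselect (A c); have [Agc|nAgc] := pselect (A (g c)); tauto.
Qed.

Lemma separated_pairs_bigcup (A : (set T)^nat) :
  separated_pairs (\bigcup_k A k) `<=` \bigcup_k separated_pairs (A k).
Proof.
move=> c [Cc sep]; apply: contrapT => nsep; apply: sep.
have AkcE k : A k c <-> A k (g c).
  by apply: contrapT => sepk; apply: nsep; exists k.
by split=> -[k _ /AkcE Akc]; exists k.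
Qed.

Lemma countably_separating_sigma_algebra :
  sigma_algebra setT [set A | countable (separated_pairs A)].
Proof.
split=> /=.
- apply: (@sub_countable _ _ _ set0); last exact: countable0.
  by apply: subset_card_le => c [_ []]; split.
- by move=> A /=; rewrite setTD separated_pairsC.
- move=> A cA /=.
  apply: sub_countable (subset_card_le (@separated_pairs_bigcup A)) _.
  by apply: bigcup_countable => [|k _]; [exact: countableP | exact: cA].
Qed.

End SeparatedPairs.

Lemma countableU (T : Type) (A B : set T) :
  countable A -> countable B -> countable (A `|` B).
Proof.
move=> cA cB; rewrite -bigcup2E.
by apply: bigcup_countable => [|[|[|i]] _] //; exact: countableP.
Qed.

Lemma realT_not_countable (R : realType) : ~ countable [set: R].
Proof.
move=> /(@countable_lebesgue_measure0 R).
by rewrite -set_itv_infty_infty lebesgue_measure_itv /=.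
Qed.

Lemma caratheodory_measurable_null (R : realType) (T : Type)
    (mu : set T -> \bar R) (A : set T) :
  (forall X, mu X = 0%E) -> caratheodory_measurable mu A.
Proof. by move=> mu0 X; rewrite !mu0 adde0. Qed.

Section OrderSelection.
Variables (R : realType) (lt : R -> R -> Prop).
Hypotheses (lt_irr : forall x, ~ lt x x)
  (lt_trans : forall x y z, lt x y -> lt y z -> lt x z)
  (lt_total : forall x y, x <> y -> lt x y \/ lt y x).

Definition order_selection (F : set R) : R :=
  xget 0 [set x | F x /\ forall z, F z -> x = z \/ lt x z].

Lemma order_selectionE r s : lt r s -> order_selection [set r; s] = r.
Proof.
move=> rs; have r_least : exists x, [set r; s] x /\
    forall z, [set r; s] z -> x = z \/ lt x z.
  by exists r; split=> [|z [->|->]]; [by left | by left | by right].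
rewrite /order_selection; have [[->|->] s_least] := xgetPex 0 r_least => //.
have [sr|sr] := s_least r (or_introl erefl); first by [].
by case: (lt_irr (lt_trans rs sr)).
Qed.

Lemma order_selection_two_point : two_point_selection order_selection.
Proof.
move=> r s /lt_total[rs|sr]; first by rewrite order_selectionE //; left.
by rewrite setUC order_selectionE //; left.
Qed.

Lemma sel_lt_order_selection r s : sel_lt order_selection r s <-> lt r s.
Proof.
split=> [[rs fr]|rs]; last first.
  split; last exact: order_selectionE.
  by move=> er; move: rs; rewrite er; exact: lt_irr.
have [//|sr] := lt_total rs.
by case: rs; rewrite -fr setUC order_selectionE.
Qed.

End OrderSelection.

Lemma sel_lt_total (R : realType) (f : set R -> R) r s :
  two_point_selection f -> r <> s ->
  sel_lt f r s \/ sel_lt f s r.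
Proof.
move=> f_sel rs; have [frs|frs] := f_sel r s rs; first by left.
by right; split; [exact: nesym | rewrite setUC].
Qed.

Lemma sel_open_filter (R : realType) (f : set R -> R) (F : set_system R) x U :
  Filter F ->
  (forall S, sel_subbase f S -> S x -> F S) -> sel_open f U -> U x -> F U.
Proof.
move=> FF subF /(_ x) oU /oU[n [G [sG [Gx GU]]]]; apply: filterS GU _.
suff Fm m : (m <= n)%N -> F (\bigcap_(i in [set i | (i < m)%N]) G i).
  exact: Fm.
elim: m => [_|m IH mn]; first by apply: filterS filterT => z _ i.
apply: filterS (filterI (IH (ltnW mn)) (subF _ (sG m mn) (Gx m mn))).
by move=> z [Gz Gmz] i /=; rewrite ltnS leq_eqVlt => /orP[/eqP->|/Gz].
Qed.

Section NullOuterMeasure.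
Variables (R : realType) (f : set R -> R) (y : nat -> R).
Hypotheses (f_sel : two_point_selection f) (top0 : forall z, sel_le f z 0)
  (y_coinitial : forall z N, exists2 j, (N <= j)%N & sel_lt f (y j) z)
  (y_small : forall j, `|y j| <= ((2 ^ j)%:R)^-1).

Let chain (M k : nat) : R := if k is 0 then 0 else y (M + k).

Lemma chain_small M k : `|chain M k| <= ((2 ^ (M + k))%:R)^-1.
Proof. by case: k => [|k] //=; rewrite normr0 invr_ge0. Qed.

Lemma chain_cover M z : exists n, sel_itv f (chain M n.+1) (chain M n) z.
Proof.
have ex : exists k, (0 < k)%N && `[< sel_lt f (chain M k) z >].
  have [j Mj yjz] := y_coinitial z M.+1; exists (j - M.+1).+1.
  by apply/asboolP; rewrite /chain addnS -addSn subnKC.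
case: (ex_minnP ex) => -[//|k] /andP[_ /asboolP kz] kmin.
exists k; split=> //; case: k kz kmin => [_ _|k _ kmin]; first exact: top0.
have [->|zk] := pselect (z = chain M k.+1); first by right.
have [//|kz] := sel_lt_total f_sel zk; first by left.
suff : (k.+2 <= k.+1)%N by rewrite ltnn.
by apply: kmin; apply/andP; split=> //; exact/asboolP.
Qed.

Lemma sel_lambda_null A : sel_lambda f A = 0%E.
Proof.
apply/eqP; rewrite eq_le; apply/andP; split; last first.
  apply/ereal_infP => _ [r [s [_ ->]]].
  by apply: nneseries_ge0 => n _ _; rewrite lee_fin.
apply/lee_addgt0Pr => e e0; rewrite add0e.
have [M eM] : exists M, 4 / e < 2 ^+ M.
  by exists (Num.Def.archi_bound (4 / e)); exact: upper_nthrootP.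
apply: le_trans (epsilon_trick0 xpredT (ltW e0)).
apply: le_trans (ereal_inf_lbound _) _.
  exists (fun n => chain M n.+1), (fun n => chain M n); split; last reflexivity.
  by move=> z _; have [n] := chain_cover M z; exists n.
apply: lee_nneseries => [n _ _|n _]; rewrite lee_fin //.
apply: le_trans (ler_normB _ _) _.
(* |chain n| + |chain n.+1| <= 3 / 2 ^ (M + n.+1) <= (4 / 2 ^ M) / 2 ^ n.+1 < e / 2 ^ n.+1 *)
have := chain_small M n; have := chain_small M n.+1.
have Me : 4 / 2 ^+ M < e by rewrite ltr_pdivrMr ?exprn_gt0 // mulrC -ltr_pdivrMr.
rewrite addnS expnS !expnD !natrM !natrX exprS !invfM.
set u := (2 ^+ M)^-1 in Me *; set v := (2 ^+ n)^-1.
have v0 : 0 <= v by rewrite invr_ge0 exprn_ge0.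
have : 0 <= u * v by rewrite mulr_ge0 // invr_ge0 exprn_ge0.
have : 0 <= (e - 4 * u) * v by rewrite mulr_ge0 // subr_ge0 ltW.
lra.
Qed.

End NullOuterMeasure.

Section PairedOrder.
Variables (R : realType) (C : set R) (g : R -> R).
Hypothesis g_bij : set_bij C (~` C) g.

Definition base (x : R) : R := if x \in C then x else 'pinv_(fun=> 0) C g x.

Lemma base_id x : C x -> base x = x.
Proof. by move=> Cx; rewrite /base mem_set. Qed.

Lemma g_notin c : C c -> ~ C (g c).
Proof. by move=> Cc; case: g_bij => g_fun _ _; exact: g_fun. Qed.

Lemma base_g c : C c -> base (g c) = c.
Proof.
move=> Cc; rewrite /base memNset; last exact: g_notin.
by case: g_bij => _ g_inj _; rewrite pinvKV ?inE.
Qed.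

Lemma g_base x : ~ C x -> g (base x) = x.
Proof.
move=> nCx; rewrite /base memNset //.
by case: g_bij => _ _ g_surj; rewrite (surjpK _ g_surj) // inE.
Qed.

Lemma base_inj x x' : base x = base x' -> (C x <-> C x') -> x = x'.
Proof.
move=> xx' [CxCx' Cx'Cx]; have [Cx|nCx] := pselect (C x).
  by rewrite -(base_id Cx) xx' base_id //; exact: CxCx'.
have nCx' : ~ C x' by move/Cx'Cx.
by rewrite -(g_base nCx) xx' g_base.
Qed.

Variable y : nat -> R.
Hypotheses (y_base_inj : injective (base \o y))
  (y_base0 : forall j, base (y j) <> base 0).

Definition key (c : R) : R :=
  if c == base 0 then pi / 2
  else if c \in range (base \o y)
  then - (pi / 2) - ('pinv_(fun=> 0%N) [set: nat] (base \o y) c).+1%:R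
  else atan c.

Variant key_spec (c : R) : R -> Prop :=
  | KeyTop of c = base 0 : key_spec c (pi / 2)
  | KeySeq j of c = base (y j) : key_spec c (- (pi / 2) - j.+1%:R)
  | KeyAtan of c <> base 0 & ~ range (base \o y) c : key_spec c (atan c).

Lemma keyP c : key_spec c (key c).
Proof.
rewrite /key; have [->|c0] := eqVneq c (base 0); first exact: KeyTop.
case: ifPn => [/set_mem[j _ <-]|/negP cy]; last first.
  by apply: KeyAtan => [/eqP|/mem_set]; [exact/negP|].
rewrite pinvKV ?inE //; first exact: KeySeq.
by move=> i k _ _; exact: y_base_inj.
Qed.

Lemma key_seq j : key (base (y j)) = - (pi / 2) - j.+1%:R.
Proof.
by case: keyP => [/y_base0|i /y_base_inj->|_ []] //; exists j.
Qed.

Lemma key_inj : injective key.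
Proof.
move=> a b; have pi0 := pi_gt0 R.
have := atan_gtNpi2 a; have := atan_ltpi2 a.
have := atan_gtNpi2 b; have := atan_ltpi2 b.
case: keyP => [->|i ->|_ _]; case: keyP => [->|j ->|_ _] //= b1 b2 a1 a2.
all: first [exact: (can_inj (@atanK R)) | move=> e].
all: try have := ler0n R i.+1; try have := ler0n R j.+1; try lra.
have /eqP : i.+1%:R = j.+1%:R :> R by lra.
by rewrite eqr_nat => /eqP[->].
Qed.

Lemma key_top : key (base 0) = pi / 2.
Proof. by rewrite /key eqxx. Qed.

Lemma key_lt_top c : c <> base 0 -> key c < key (base 0).
Proof.
rewrite key_top; have := pi_gt0 R.
case: keyP => [//|j _ pi0 _|_ _ _ _]; last exact: atan_ltpi2.
by have := ler0n R j.+1; lra.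
Qed.

Lemma key_bounded_below c : exists N, - (pi / 2) - N%:R < key c.
Proof.
have := pi_gt0 R; case: keyP => [_|j _|_ _] pi0.
- by exists 0%N; lra.
- by exists j.+2; rewrite -[j.+2]addn1 natrD; lra.
- by exists 0%N; rewrite subr0; exact: atan_gtNpi2.
Qed.

Definition rank (x : R) : R := key (base x).

Definition paired_lt (a b : R) : Prop :=
  rank a < rank b \/ rank a = rank b /\ C a /\ ~ C b.

Lemma paired_lt_irr a : ~ paired_lt a a.
Proof. by case=> [|[_ []]//]; rewrite ltxx. Qed.

Lemma paired_lt_trans a b c : paired_lt a b -> paired_lt b c -> paired_lt a c.
Proof.
rewrite /paired_lt; case=> [ab|[ab [Ca nCb]]] [bc|[bc [Cb nCc]]].
- by left; exact: lt_trans ab bc.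
- by left; rewrite -bc.
- by left; rewrite ab.
- by [].
Qed.

Lemma paired_lt_total a b : a <> b -> paired_lt a b \/ paired_lt b a.
Proof.
rewrite /paired_lt => ab; have [lt|lt|ab_rank] := ltgtP (rank a) (rank b).
- by left; left.
- by right; left.
have [Ca|nCa] := pselect (C a); have [Cb|nCb] := pselect (C b).
- by case: ab; apply: base_inj (key_inj ab_rank) _.
- by left; right.
- by right; right.
- by case: ab; apply: base_inj (key_inj ab_rank) _.
Qed.

Lemma paired_lt_rank a b : paired_lt a b -> rank a <= rank b.
Proof. by case=> [/ltW|[->]]. Qed.

Definition paired_selection : set R -> R := order_selection paired_lt.

Lemma paired_selection_two_point : two_point_selection paired_selection.
Proof.
exact: order_selection_two_point paired_lt_irr paired_lt_trans paired_lt_total.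
Qed.

Lemma sel_lt_paired r s : sel_lt paired_selection r s <-> paired_lt r s.
Proof.
exact: sel_lt_order_selection paired_lt_irr paired_lt_trans paired_lt_total r s.
Qed.

Lemma paired_selection_top : ~ C 0 -> forall z, sel_le paired_selection z 0.
Proof.
move=> C0 z; have [->|z0] := pselect (z = 0); first by right.
left; apply/sel_lt_paired; rewrite /paired_lt; have [zb|zb] := pselect (base z = base 0).
  right; split; first by rewrite /rank zb.
  split=> //; apply: contrapT => nCz; apply: z0.
  by apply: (base_inj zb); split=> [/nCz|/C0].
by left; apply: key_lt_top.
Qed.

Lemma paired_selection_seq_coinitial z N :
  exists2 j, (N <= j)%N & sel_lt paired_selection (y j) z.
Proof.
have [M Mz] := key_bounded_below (base z); exists (maxn N M); first exact: leq_maxl.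
apply/sel_lt_paired; left; rewrite /rank key_seq; apply: le_lt_trans Mz.
by rewrite lerD2l lerN2 ler_nat (leq_trans (leq_maxr N M)).
Qed.

Definition rank_left (v : R) : set_system R :=
  filter_from [set a | a < v] (fun a => [set x | a < rank x < v]).

Definition rank_right (v : R) : set_system R :=
  filter_from [set b | v < b] (fun b => [set x | v < rank x < b]).

Lemma rank_left_filter v : Filter (rank_left v).
Proof.
apply: filter_from_filter; first by exists (v - 1); rewrite /= ltrBlDr ltrDl.
move=> a b av bv; exists (Num.max a b); first by rewrite /= gt_max av bv.
by move=> x /andP[]; rewrite gt_max => /andP[ax bx] xv; split; apply/andP.
Qed.

Lemma rank_right_filter v : Filter (rank_right v).
Proof.
apply: filter_from_filter; first by exists (v + 1); rewrite /= ltrDl.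
move=> a b va vb; exists (Num.min a b); first by rewrite /= lt_min va vb.
by move=> x /andP[vx]; rewrite lt_min => /andP[xa xb]; split; apply/andP.
Qed.

Lemma sel_open_rank_left U c : C c ->
  sel_open paired_selection U -> U c -> rank_left (key c) U.
Proof.
move=> Cc; apply: sel_open_filter (rank_left_filter _) _ => S [r [->|->]].
  move=> /sel_lt_paired/paired_lt_rank; rewrite /rank (base_id Cc) => cr.
  exists (key c - 1); first by rewrite /= ltrBlDr ltrDl.
  by move=> x /andP[_ xc]; apply/sel_lt_paired; left; exact: lt_le_trans cr.
move=> /sel_lt_paired[|[_ [_ /(_ Cc)[]]]]; rewrite /rank (base_id Cc) => rc.
exists (rank r) => // x /andP[rx _]; exact/sel_lt_paired/or_introl.
Qed.

Lemma sel_open_rank_right U c : C c ->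
  sel_open paired_selection U -> U (g c) -> rank_right (key c) U.
Proof.
move=> Cc; apply: sel_open_filter (rank_right_filter _) _ => S [r [->|->]].
  move=> /sel_lt_paired[|[_ [/(g_notin Cc)[]]]]; rewrite /rank (base_g Cc) => cr.
  exists (rank r) => // x /andP[_ xr]; exact/sel_lt_paired/or_introl.
move=> /sel_lt_paired/paired_lt_rank; rewrite /rank (base_g Cc) => rc.
exists (key c + 1); first by rewrite /= ltrDl.
by move=> x /andP[cx _]; apply/sel_lt_paired; left; exact: le_lt_trans cx.
Qed.

Lemma sel_open_separated_pairs U :
  sel_open paired_selection U -> countable (separated_pairs C g U).
Proof.
move=> oU.
rewrite [separated_pairs _ _ _](_ : _ = [set c | C c /\ U c /\ ~ U (g c)] `|`
                                      [set c | C c /\ ~ U c /\ U (g c)]).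
apply: countableU.
- apply: countable_left_isolated (in2W key_inj) _ => c [Cc [Uc nUgc]].
  have [a ac aU] := sel_open_rank_left Cc oU Uc.
  exists a => // c' [Cc' [_ nUgc']] c'c; rewrite leNgt; apply/negP => ac'.
  by apply: nUgc'; apply: aU; rewrite /= /rank (base_g Cc') ac'.
- apply: countable_right_isolated (in2W key_inj) _ => c [Cc [nUc Ugc]].
  have [b cb bU] := sel_open_rank_right Cc oU Ugc.
  exists b => // c' [Cc' [nUc' _]] cc'; rewrite leNgt; apply/negP => c'b.
  by apply: nUc'; apply: bU; rewrite /= /rank (base_id Cc') cc'.
apply/seteqP; split=> c.
  move=> [Cc sep]; have [Uc|nUc] := pselect (U c).
    by left; split=> //; split=> // Ugc; apply: sep.
  by right; split=> //; split=> //; apply: contrapT => nUgc; apply: sep.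
move=> [[Cc [Uc nUgc]]|[Cc [nUc Ugc]]]; split=> // sep.
  by apply: nUgc; apply/sep.
by apply: nUc; apply/sep.
Qed.

Lemma paired_selection_not_borel : ~ countable C -> ~ sel_borel paired_selection C.
Proof.
move=> nC C_borel; apply: nC.
have : countable (separated_pairs C g C).
  apply: (smallest_sub (countably_separating_sigma_algebra C g) _ C_borel).
  exact: sel_open_separated_pairs.
apply: sub_countable; apply: subset_card_le => c Cc.
by rewrite /separated_pairs; split=> // -[/(_ Cc)/(g_notin Cc)].
Qed.

End PairedOrder.

Lemma exists_paired_sequence (R : realType) (C : set R) (g : R -> R) :
  set_bij C (~` C) g -> ~ C 0 ->
  exists y : nat -> R, [/\ injective (base C g \o y),
    forall j, base C g (y j) <> base C g 0 &
    forall j, `|y j| <= ((2 ^ j)%:R)^-1].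
Proof.
move=> g_bij C0; pose t n : R := ((2 ^ n)%:R)^-1.
have t_gt0 n : 0 < t n by rewrite invr_gt0 ltr0n expn_gt0.
have t_inj : injective t.
  by move=> m n /invr_inj/eqP; rewrite eqr_nat => /eqP/expnI->.
suff [P [freqP P_inj P_base0]] : exists P : nat -> Prop, [/\
    forall N, exists2 n, (N <= n)%N & P n,
    forall m n, P m -> P n -> base C g (t m) = base C g (t n) -> m = n &
    forall n, P n -> base C g (t n) <> base C g 0].
  have [phi [phi_inj phi_ge Pphi]] := frequently_subsequence freqP.
  exists (t \o phi); split=> [i j /P_inj ij|j|j].
  - by apply: phi_inj; apply: ij; exact: Pphi.
  - exact: P_base0.
  - rewrite /= gtr0_norm ?t_gt0 // /t lef_pV2 ?posrE ?ltr0n ?expn_gt0 // ler_nat.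
    by rewrite leq_pexp2l.
have [freqC|freqNC] := frequently_or_frequently_not (fun n => C (t n)).
- exists (fun n => C (t n) /\ t n <> base C g 0); split.
  + move=> N; have [n Nn Cn] := freqC N; have [m nm Cm] := freqC n.+1.
    have [tn0|/eqP tn0] := eqVneq (t n) (base C g 0); last by exists n.
    exists m; first by rewrite (leq_trans Nn) // ltnW.
    by split=> // tm0; move: nm; rewrite (t_inj m n) ?ltnn // tm0 tn0.
  + by move=> m n [Cm _] [Cn _]; rewrite !(base_id g_bij) //; exact: t_inj.
  + by move=> n [Cn tn0]; rewrite (base_id g_bij).
- exists (fun n => ~ C (t n)); split=> // [m n Cm Cn mn|n Cn tn0].
    by apply: t_inj; apply: (base_inj g_bij mn); split=> [/Cm|/Cn].
  by have := t_gt0 n; rewrite (base_inj g_bij tn0) ?ltxx.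
Qed.

(* [card_set_bijP] needs a pointed codomain, which a realType is not by default. *)
Section RealPointed.
Variable R : realType.
HB.instance Definition _ := isPointed.Build R 0.

Lemma card_eq_set_bij (A B : set R) :
  (A #= B)%card -> exists g : R -> R, set_bij A B g.
Proof. exact/card_set_bijP. Qed.

End RealPointed.

Lemma exists_null_non_borel_selection (R : realType) (C : set R) :
  (C #= [set: R])%card -> (~` C #= [set: R])%card -> ~ C 0 ->
  exists f : set R -> R, [/\ two_point_selection f,
    forall A, sel_lambda f A = 0%E & ~ sel_borel f C].
Proof.
move=> CT nCT C0.
have [g g_bij] := card_eq_set_bij (card_eq_trans CT (card_esym nCT)).
have [y [y_inj y_base0 y_small]] := exists_paired_sequence g_bij C0.
have f_sel : two_point_selection (paired_selection C g y).
  exact: paired_selection_two_point y_inj.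
exists (paired_selection C g y); split=> //.
- apply: sel_lambda_null y_small => //.
    exact: paired_selection_top.
  exact: paired_selection_seq_coinitial.
- apply: paired_selection_not_borel => //.
  by rewrite (eq_countable CT); exact: realT_not_countable.
Qed.

Theorem theorem3p21 (R : realType) (C : set R) :
  (C #= [set: R])%card -> (~` C #= [set: R])%card ->
  exists f : set R -> R, two_point_selection f /\
    caratheodory_measurable (sel_lambda f) C /\ ~ sel_borel f C.
Proof.
move=> CT nCT; have [C0|C0] := pselect (C 0).
- have nnCT : (~` ~` C #= [set: R])%card by rewrite setCK.
  have [f [f_sel f_null nC_nB]] :=
    exists_null_non_borel_selection nCT nnCT (fun nC0 => nC0 C0).
  exists f; split=> //; split; first exact: caratheodory_measurable_null.
  by move=> /sigma_algebraCD; rewrite setTD.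
- have [f [f_sel f_null C_nB]] := exists_null_non_borel_selection CT nCT C0.
  by exists f; split=> //; split=> //; exact: caratheodory_measurable_null.
Qed.
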